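(* Let $(\mathcal{B},\mathcal{B}',\langle\cdot,\cdot\rangle,k)$ be an RKBS with kernel on a set $X$ such that the set $\{k(x,\cdot):x\in X\}\subset\mathcal{B}'$ is linearly independent, and let $f:X\to X$. Then the Perron–Frobenius operator $K_f$ is densely defined with respect to $\langle\cdot,\cdot\rangle$, and $U_f=K_f'$, where $K_f'$ is the adjoint of $K_f$ with respect to $\langle\cdot,\cdot\rangle$.
   Context: An RKBS with kernel on $X$ is a quadruple $(\mathcal{B},\mathcal{B}',\langle\cdot,\cdot\rangle,k)$: $\mathcal{B},\mathcal{B}'$ are Banach spaces of functions on $X$ (pointwise operations), point evaluations on $\mathcal{B}$ are continuous, $\langle\cdot,\cdot\rangle:\mathcal{B}\times\mathcal{B}'\to\mathbb{C}$ is continuous bilinear, and $k:X\times X\to\mathbb{C}$ satisfies $k(x,\cdot)\in\mathcal{B}'$ and $g(x)=\langle g,k(x,\cdot)\rangle$ for all $x\in X$, $g\in\mathcal{B}$. The Koopman operator is $U_fg:=g\circ f$ on $D(U_f):=\{g\in\mathcal{B}: g\circ f\in\mathcal{B}\}$. The Perron–Frobenius operator $K_f:\mathrm{Span}\{k(x,\cdot):x\in X\}\to\mathrm{Span}\{k(x,\cdot):x\in X\}$ is the linear extension of $K_fk(x,\cdot):=k(f(x),\cdot)$. A subset $W\subset\mathcal{B}'$ is dense with respect to $\langle\cdot,\cdot\rangle$ if $g\in\mathcal{B}$ and $\langle g,w\rangle=0$ for all $w\in W$ imply $g=0$; an operator is densely defined w.r.t. $\langle\cdot,\cdot\rangle$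 if its domain is dense in this sense. For a densely defined $T:D(T)\subset\mathcal{B}'\to\mathcal{B}'$, its adjoint with respect to $\langle\cdot,\cdot\rangle$ is $T':D(T')\subset\mathcal{B}\to\mathcal{B}$ with $D(T')=\{g\in\mathcal{B}:\exists z\in\mathcal{B}\text{ with }\langle g,Th\rangle=\langle z,h\rangle\ \forall h\in D(T)\}$ and $T'g:=z$. Equality $U_f=K_f'$ includes equality of domains. *)

From HB Require Import structures.
From mathcomp Require Import all_boot all_order all_algebra.
From mathcomp Require Import complex.
From mathcomp Require Import all_classical all_reals.

Set Implicit Arguments.
Unset Strict Implicit.
Unset Printing Implicit Defensive.

Import Order.TTheory GRing.Theory Num.Theory.
Import ComplexField.
Local Open Scope ring_scope.
Local Open Scope classical_set_scope.

Section RKBS.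
Variables (R : realType) (X : Type).
Local Notation C := R[i].
Local Notation F := (X -> C).

Definition is_subspace (V : set F) : Prop :=
  V (fun _ => 0) /\
  (forall g h, V g -> V h -> V (fun x => g x + h x)) /\
  (forall (c : C) g, V g -> V (fun x => c * g x)).

Definition is_norm_on (V : set F) (n : F -> R) : Prop :=
  (forall g, V g -> 0 <= n g) /\
  (forall g, V g -> n g = 0 -> g = (fun _ => 0)) /\
  (forall (c : C) g, V g -> (n (fun x => c * g x))%:C%C = `|c| * (n g)%:C%C) /\
  (forall g h, V g -> V h -> n (fun x => g x + h x) <= n g + n h).

Definition is_complete_on (V : set F) (n : F -> R) : Prop :=
  forall u : nat -> F, (forall m, V (u m)) ->
    (forall e : R, 0 < e -> exists N, forall p q, (N <= p)%N -> (N <= q)%N ->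
         n (fun x => u p x - u q x) < e) ->
    exists l, V l /\
      (forall e : R, 0 < e -> exists N, forall p, (N <= p)%N ->
         n (fun x => u p x - l x) < e).

Definition is_Banach_fun_space (V : set F) (n : F -> R) : Prop :=
  [/\ is_subspace V, is_norm_on V n & is_complete_on V n].

Definition is_bilinear_on (B B' : set F) (pair : F -> F -> C) : Prop :=
  [/\ (forall g1 g2 h, B g1 -> B g2 -> B' h ->
          pair (fun x => g1 x + g2 x) h = pair g1 h + pair g2 h),
      (forall (c : C) g h, B g -> B' h -> pair (fun x => c * g x) h = c * pair g h),
      (forall g h1 h2, B g -> B' h1 -> B' h2 ->
          pair g (fun x => h1 x + h2 x) = pair g h1 + pair g h2) &
      (forall (c : C) g h, B g -> B' h -> pair g (fun x => c * h x) = c * pair g h)].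

(** Continuity of the linear functionals
    (point evaluations) and of the bilinear form is expressed, as usual for
    (multi)linear maps on normed spaces, as boundedness. *)
Definition is_RKBS (B : set F) (nB : F -> R) (B' : set F) (nB' : F -> R)
    (pair : F -> F -> C) (k : X -> X -> C) : Prop :=
  [/\ is_Banach_fun_space B nB /\ is_Banach_fun_space B' nB',
      (forall x, exists M : R, forall g, B g -> `|g x| <= (M * nB g)%:C%C),
      is_bilinear_on B B' pair,
      (exists M : R, forall g h, B g -> B' h -> `|pair g h| <= (M * nB g * nB' h)%:C%C) &
      (forall x, B' (k x)) /\ (forall x g, B g -> g x = pair g (k x))].

Definition kcomb (k : X -> X -> C) (n : nat) (c : 'I_n -> C) (p : 'I_n -> X) : F :=
  fun y => \sum_(i < n) c i * k (p i) y.

Definition kernel_lin_indep (k : X -> X -> C) : Prop :=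
  forall n (c : 'I_n -> C) (p : 'I_n -> X), injective p ->
    kcomb k c p = (fun _ => 0) -> forall i, c i = 0.

Definition kspan (k : X -> X -> C) : set F :=
  [set w | exists n (c : 'I_n -> C) (p : 'I_n -> X), w = kcomb k c p].

(** Perron--Frobenius operator: linear extension of k(x,.) |-> k(f x,.)
    on Span{k(x,.)}; (well defined when the k(x,.) are linearly independent;
    outside the span it is given the irrelevant value 0). *)
Definition PF (k : X -> X -> C) (f : X -> X) (w : F) : F :=
  xget (fun _ => 0)
    [set v | exists n (c : 'I_n -> C) (p : 'I_n -> X),
               w = kcomb k c p /\ v = kcomb k c (f \o p)].

Definition koopman_dom (B : set F) (f : X -> X) : set F :=
  [set g | B g /\ B (g \o f)].
Definition koopman (f : X -> X) (g : F) : F := g \o f.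

Definition dense_wrt (B : set F) (pair : F -> F -> C) (W : set F) : Prop :=
  forall g, B g -> (forall w, W w -> pair g w = 0) -> g = (fun _ => 0).

Definition adjoint_rel (B : set F) (pair : F -> F -> C) (DT : set F) (T : F -> F)
    (g z : F) : Prop :=
  B z /\ forall h, DT h -> pair g (T h) = pair z h.
Definition adjoint_dom (B : set F) (pair : F -> F -> C) (DT : set F) (T : F -> F)
    : set F :=
  [set g | B g /\ exists z, adjoint_rel B pair DT T g z].
Definition adjoint (B : set F) (pair : F -> F -> C) (DT : set F) (T : F -> F)
    (g : F) : F :=
  xget (fun _ => 0) [set z | adjoint_rel B pair DT T g z].

End RKBS.

From HB Require Import structures.
From mathcomp Require Import all_boot all_order all_algebra.
From mathcomp Require Import complex.
From mathcomp Require Import all_classical all_reals.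
Import Order.TTheory GRing.Theory Num.Theory.
Import ComplexField.
Local Open Scope ring_scope.
Local Open Scope classical_set_scope.

(* Pairing g with sum_i c_i k(p_i, .) gives sum_i c_i g(p_i).  Linear
   independence of the k(x, .) makes the functional phi |-> sum_i c_i phi(p_i)
   depend only on the element sum_i c_i k(p_i, .) of the span, so K_f is well
   defined and <g, K_f h> = <g o f, h> on the span; conversely, testing an
   adjoint value z against h = k(x, .) gives z(x) = g(f x). *)

Set Implicit Arguments.
Unset Strict Implicit.

Section PointEvaluationCombinations.
Variables (R : realType) (X : Type).
Local Notation C := R[i].

Definition evalcomb n (c : 'I_n -> C) (p : 'I_n -> X) (phi : X -> C) : C :=
  \sum_(i < n) c i * phi (p i).

Lemma evalcomb_comp n (c : 'I_n -> C) (p : 'I_n -> X) (f : X -> X) phi :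
  evalcomb c (f \o p) phi = evalcomb c p (phi \o f).
Proof. by []. Qed.

Definition distinct_evalcomb (L : (X -> C) -> C) : Prop :=
  exists m (d : 'I_m -> C) (q : 'I_m -> X), injective q /\ L = evalcomb d q.

Lemma distinct_evalcomb0 : distinct_evalcomb (fun _ => 0).
Proof.
have q : 'I_0 -> X by case.
exists 0%N, (fun _ => 0), q; split; first by case.
by apply: funext => phi; rewrite /evalcomb big_ord0.
Qed.

Lemma distinct_evalcombDpoint L (a : C) (x : X) :
  distinct_evalcomb L -> distinct_evalcomb (fun phi => L phi + a * phi x).
Proof.
move=> [m [d [q [q_inj ->]]]].
case: (pselect (exists j, q j = x)) => [[j0 qj0] | x_new].
  exists m, (fun j => d j + (j == j0)%:R * a), q; split=> //.
  apply: funext => phi; rewrite /evalcomb.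
  under [RHS]eq_bigr => j _ do rewrite mulrDl.
  rewrite big_split /=; congr (_ + _).
  rewrite (bigD1 j0) //= eqxx mul1r qj0 big1 ?addr0 // => j /negbTE->.
  by rewrite !mul0r.
exists m.+1, (fun j => if unlift ord_max j is Some j' then d j' else a),
  (fun j => if unlift ord_max j is Some j' then q j' else x); split.
  move=> i j; case: unliftP => [i'|] ->; case: unliftP => [j'|] -> //.
  - by move=> /q_inj ->.
  - by move=> qi'x; case: x_new; exists i'.
  - by move=> xqj'; case: x_new; exists j'.
apply: funext => phi; rewrite /evalcomb big_ord_recr /= unlift_none.
congr (_ + _); apply: eq_bigr => j _.
by rewrite (_ : widen_ord _ j = lift ord_max j) ?liftK //; exact/val_inj/esym/lift_max.
Qed.

Lemma distinct_evalcombD L n (c : 'I_n -> C) (p : 'I_n -> X) :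
  distinct_evalcomb L -> distinct_evalcomb (fun phi => L phi + evalcomb c p phi).
Proof.
elim: n c p => [|n IH] c p L_distinct.
  by under eq_fun => phi do rewrite /evalcomb big_ord0 addr0.
under eq_fun => phi do rewrite /evalcomb big_ord_recr /= addrA.
exact/distinct_evalcombDpoint/IH.
Qed.

Lemma evalcomb_distinct n (c : 'I_n -> C) (p : 'I_n -> X) :
  distinct_evalcomb (evalcomb c p).
Proof.
have := distinct_evalcombD c p distinct_evalcomb0.
by under eq_fun => phi do rewrite add0r.
Qed.

End PointEvaluationCombinations.

Section KernelSpan.
Variables (R : realType) (X : Type) (k : X -> X -> R[i]).
Hypothesis k_indep : kernel_lin_indep k.

Lemma kcombE n (c : 'I_n -> R[i]) (p : 'I_n -> X) y :
  kcomb k c p y = evalcomb c p (k^~ y).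
Proof. by []. Qed.

Lemma kcomb0 (c : 'I_0 -> R[i]) (p : 'I_0 -> X) : kcomb k c p = fun _ => 0.
Proof. by apply: funext => y; rewrite /kcomb big_ord0. Qed.

Lemma kcombS n (c : 'I_n.+1 -> R[i]) (p : 'I_n.+1 -> X) :
  kcomb k c p = fun y =>
    kcomb k (c \o widen_ord (leqnSn n)) (p \o widen_ord (leqnSn n)) y
    + c ord_max * k (p ord_max) y.
Proof. by apply: funext => y; rewrite /kcomb big_ord_recr. Qed.

Lemma kcomb1 x : k x = kcomb k (fun _ : 'I_1 => 1) (fun _ => x).
Proof. by apply: funext => y; rewrite /kcomb big_ord1 mul1r. Qed.

Lemma kcomb_inj n (c : 'I_n -> R[i]) p m (d : 'I_m -> R[i]) q :
  kcomb k c p = kcomb k d q -> evalcomb c p = evalcomb d q.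
Proof.
move=> kcomb_eq.
have evalcombN phi : evalcomb (fun j => - d j) q phi = - evalcomb d q phi.
  by rewrite /evalcomb -sumrN; apply: eq_bigr => j _; rewrite mulNr.
have [r [e [s [s_inj diffE]]]] := distinct_evalcombD (fun j => - d j) q
  (evalcomb_distinct c p).
have diff_eq0 phi : evalcomb e s phi = 0 -> evalcomb c p phi = evalcomb d q phi.
  by rewrite -diffE evalcombN => /eqP; rewrite subr_eq0 => /eqP.
have e0 : forall j, e j = 0.
  apply: k_indep s_inj _; apply: funext => y.
  by rewrite kcombE -diffE evalcombN -!kcombE kcomb_eq subrr.
apply: funext => phi; apply: diff_eq0.
by apply: big1 => j _; rewrite e0 mul0r.
Qed.

Lemma kspan_k x : kspan k (k x).
Proof. by exists 1%N, (fun _ => 1), (fun _ => x); apply: kcomb1. Qed.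

Lemma PF_kcomb f n (c : 'I_n -> R[i]) p :
  PF k f (kcomb k c p) = kcomb k c (f \o p).
Proof.
rewrite /PF; set S := [set v | _].
have : S (xget (fun _ => 0) S).
  by apply: xgetPex; exists (kcomb k c (f \o p)), n, c, p.
move=> [n' [c' [p' [kcomb_eq ->]]]]; apply: funext => y.
by rewrite !kcombE !evalcomb_comp (kcomb_inj kcomb_eq).
Qed.

Lemma PF_k f x : PF k f (k x) = k (f x).
Proof. by rewrite [k x]kcomb1 PF_kcomb -kcomb1. Qed.

End KernelSpan.

Section ReproducingPairing.
Variables (R : realType) (X : Type) (B B' : set (X -> R[i])).
Variables (pair : (X -> R[i]) -> (X -> R[i]) -> R[i]) (k : X -> X -> R[i]).
Hypothesis B'_subspace : is_subspace B'.
Hypothesis pairD : forall g h1 h2, B g -> B' h1 -> B' h2 ->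
  pair g (fun x => h1 x + h2 x) = pair g h1 + pair g h2.
Hypothesis pairZ : forall c g h, B g -> B' h ->
  pair g (fun x => c * h x) = c * pair g h.
Hypothesis k_in : forall x, B' (k x).
Hypothesis k_reproducing : forall x g, B g -> g x = pair g (k x).

Lemma kcomb_in n (c : 'I_n -> R[i]) p : B' (kcomb k c p).
Proof.
case: B'_subspace => B'0 [B'D B'Z].
elim: n c p => [|n IH] c p; first by rewrite kcomb0.
by rewrite kcombS; apply: B'D => //; apply: B'Z.
Qed.

Lemma pair_kcomb g n (c : 'I_n -> R[i]) p :
  B g -> pair g (kcomb k c p) = evalcomb c p g.
Proof.
case: B'_subspace => B'0 [_ B'Z] Bg.
elim: n c p => [|n IH] c p.
  rewrite kcomb0 /evalcomb big_ord0 -[RHS](mul0r (pair g (fun _ => 0))) -pairZ //.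
  by congr pair; apply: funext => x; rewrite mul0r.
rewrite kcombS pairD //; [|exact: kcomb_in | exact: B'Z].
rewrite pairZ // IH -k_reproducing //.
by rewrite /evalcomb big_ord_recr.
Qed.

Hypothesis k_indep : kernel_lin_indep k.

Lemma adjoint_rel_PF f g z : B g ->
  adjoint_rel B pair (kspan k) (PF k f) g z <-> B (g \o f) /\ z = g \o f.
Proof.
move=> Bg; split=> [[Bz z_adj] | [Bgf ->]].
  suff zE : z = g \o f by rewrite -zE.
  apply: funext => x; have := z_adj _ (kspan_k k x).
  by rewrite PF_k // -!k_reproducing.
split=> // _ [n [c [p ->]]].
by rewrite PF_kcomb // !pair_kcomb.
Qed.

End ReproducingPairing.

Theorem lemma2 (R : realType) (X : Type)
    (B : set (X -> R[i])) (nB : (X -> R[i]) -> R)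
    (B' : set (X -> R[i])) (nB' : (X -> R[i]) -> R)
    (pair : (X -> R[i]) -> (X -> R[i]) -> R[i]) (k : X -> X -> R[i])
    (HB : is_RKBS B nB B' nB' pair k) (Hind : kernel_lin_indep k)
    (f : X -> X) :
  dense_wrt B pair (kspan k) /\
  koopman_dom B f = adjoint_dom B pair (kspan k) (PF k f) /\
  (forall g, adjoint_dom B pair (kspan k) (PF k f) g ->
     adjoint B pair (kspan k) (PF k f) g = koopman f g).
Proof.
case: HB => [[_ [B'_subspace _ _]] _ [_ _ pairD pairZ] _ [k_in k_reproducing]].
have adjE := adjoint_rel_PF B'_subspace pairD pairZ k_in k_reproducing Hind f.
split; [|split].
- move=> g Bg g_perp; apply: funext => x.
  by rewrite k_reproducing // g_perp //; exact: kspan_k.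
- apply/seteqP; split=> g [Bg].
    by move=> Bgf; split=> //; exists (g \o f); apply/adjE.
  by move=> [z /adjE[] // Bgf _].
- move=> g [Bg z_ex].
  by have /adjE[] // := xgetPex (fun _ => 0) z_ex.
Qed.
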